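(* Let $n,m\ge 1$ be integers and let $V(n,m)=\{1,\dots,n\}\times\{1,\dots,m\}\subset\mathbb{R}^2$. The minimum number of segments of a (possibly self-crossing) polygonal path covering $V(n,m)$ is $2\min(n,m)-2$ if $n=m\ge 3$, and $2\min(n,m)-1$ otherwise. The minimum number of segments of a noncrossing polygonal path covering $V(n,m)$ is $2\min(n,m)-1$ for all $n,m\ge 1$.
   Context: $V(n,m)$ is the vertex set of the $n\times m$ orthogonal unit grid ($n$ columns, $m$ rows). A polygonal path is a sequence of points $p_0,p_1,\dots,p_k$ in the plane ($k\ge 1$) together with the closed straight-line segments $p_{i-1}p_i$, $i=1,\dots,k$, each of positive length; its number of segments is $k$. The turning points $p_i$ may be arbitrary points of the plane (not necessarily grid points). The path covers a point set $P$ if every point of $P$ lies on the union of its segments. The path is noncrossing if any two of its segments intersect only when they are consecutive, and then only in their common endpoint. *)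

From Stdlib Require Import Reals Arith.
Open Scope R_scope.

Definition point := (R * R)%type.

Definition on_seg (a b x : point) : Prop :=
  exists t : R, 0 <= t <= 1 /\
    x = (fst a + t * (fst b - fst a), snd a + t * (snd b - snd a)).

(* A polygonal path with k segments is given by points p 0, ..., p k
   (only these values of p matter); segment i (1 <= i <= k) is
   [p (i-1), p i]; k >= 1 and every segment has positive length. *)
Definition polypath (k : nat) (p : nat -> point) : Prop :=
  (1 <= k)%nat /\ forall i : nat, (1 <= i <= k)%nat -> p (i - 1)%nat <> p i.

Definition covers (k : nat) (p : nat -> point) (P : point -> Prop) : Prop :=
  forall x, P x -> exists i : nat, (1 <= i <= k)%nat /\ on_seg (p (i - 1)%nat) (p i) x.

Definition noncrossing (k : nat) (p : nat -> point) : Prop :=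
  forall i j : nat, (1 <= i)%nat -> (i < j)%nat -> (j <= k)%nat ->
    forall x, on_seg (p (i - 1)%nat) (p i) x -> on_seg (p (j - 1)%nat) (p j) x ->
      j = S i /\ x = p i.

Definition grid (n m : nat) (x : point) : Prop :=
  exists a b : nat, (1 <= a <= n)%nat /\ (1 <= b <= m)%nat /\ x = (INR a, INR b).

Definition min_cover_segments (P : point -> Prop) (s : nat) : Prop :=
  (exists p, polypath s p /\ covers s p P) /\
  (forall k p, polypath k p -> covers k p P -> (s <= k)%nat).

Definition min_noncrossing_cover_segments (P : point -> Prop) (s : nat) : Prop :=
  (exists p, polypath s p /\ noncrossing s p /\ covers s p P) /\
  (forall k p, polypath k p -> noncrossing k p -> covers k p P -> (s <= k)%nat).

(* Upper bounds: a zigzag path covers V(n,m) with 2 min(n,m) - 1 noncrossing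
   segments; for n = m >= 3 a self-crossing spiral with 2n - 2 segments is
   built by induction, adding a column and a row and turning by a half-turn.

   Lower bound: call a grid line free if no segment lies on it.  If all n
   columns carry vertical segments, these are separated by other segments,
   so k >= 2n - 1 (Section LineRuns); likewise for rows.  Points on a free
   column and a free row lie on diagonal (non-axis-parallel) segments.  With
   one free column every free row needs its own diagonal: k >= n + m - 1.
   With two free columns and rows, the border of the subgrid they span has
   2(free columns + free rows) - 4 points, at most two per diagonal
   (Section Rectangle): k >= n + m - 2.  If equality holds, the diagonals
   pair up the border points by chords, two of which must cross (Sections
   Matching and BorderWalk); this is impossible for a noncrossing path and
   for a path of two segments. *)

From Stdlib Require Import Reals Arith Lra Lia Psatz List Sorting.Sorted.
From Stdlib Require Import Classical ClassicalEpsilon.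
Import ListNotations.

Open Scope R_scope.

Definition lerp (a b : point) (t : R) : point :=
  (fst a + t * (fst b - fst a), snd a + t * (snd b - snd a)).

Definition cross (a b c : point) : R :=
  (fst b - fst a) * (snd c - snd a) - (snd b - snd a) * (fst c - fst a).

Lemma point_eq (a b : point) : fst a = fst b -> snd a = snd b -> a = b.
Proof. destruct a, b; simpl; intros; subst; reflexivity. Qed.

Lemma cross_lerp u w a b l :
  cross u w (lerp a b l) = (1 - l) * cross u w a + l * cross u w b.
Proof. unfold cross, lerp; simpl; ring. Qed.

Lemma cross_lerp_collinear a b t1 t2 t3 :
  cross (lerp a b t1) (lerp a b t2) (lerp a b t3) = 0.
Proof. unfold cross, lerp; simpl; ring. Qed.

Lemma collinear_lerp u w z : fst u <> fst w -> cross u w z = 0 ->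
  z = lerp u w ((fst z - fst u) / (fst w - fst u)).
Proof.
  unfold cross, lerp; intros hx hc.
  destruct u as [u1 u2], w as [w1 w2], z as [z1 z2]; simpl in *.
  assert (hd : w1 - u1 <> 0) by lra.
  assert (ey : z2 - u2 = (w2 - u2) * (z1 - u1) / (w1 - u1)).
  { apply (Rmult_eq_reg_l (w1 - u1)); auto. field_simplify; auto. lra. }
  f_equal; [field; auto|].
  replace z2 with (u2 + (z2 - u2)) at 1 by ring. rewrite ey. field; auto.
Qed.

Lemma lerp_before u w t : t < 0 ->
  u = lerp (lerp u w t) w (- t / (1 - t)) /\ 0 < - t / (1 - t) < 1.
Proof.
  intros ht; split.
  - destruct u, w; unfold lerp; simpl; f_equal; field; lra.
  - split; [apply Rdiv_lt_0_compat; lra|].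
    apply (Rmult_lt_reg_r (1 - t)); [lra|]. field_simplify; lra.
Qed.

Lemma lerp_after u w t : 1 < t ->
  w = lerp u (lerp u w t) (/ t) /\ 0 < / t < 1.
Proof.
  intros ht; split.
  - destruct u, w; unfold lerp; simpl; f_equal; field; lra.
  - split; [apply Rinv_0_lt_compat; lra|].
    apply (Rmult_lt_reg_r t); [lra|]. field_simplify; lra.
Qed.

Lemma lerp_inj a b t t' : a <> b -> lerp a b t = lerp a b t' -> t = t'.
Proof.
  intros hab e; destruct a as [a1 a2], b as [b1 b2]; unfold lerp in e; simpl in e.
  injection e; intros e2 e1.
  destruct (Req_dec b1 a1) as [h|h].
  - assert (b2 <> a2) by (intro; apply hab; subst; reflexivity).
    assert (z : (t - t') * (b2 - a2) = 0) by lra.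
    apply Rmult_integral in z; destruct z; lra.
  - assert (z : (t - t') * (b1 - a1) = 0) by lra.
    apply Rmult_integral in z; destruct z; lra.
Qed.

Lemma seg_unique_x a b x y : fst a <> fst b ->
  on_seg a b x -> on_seg a b y -> fst x = fst y -> x = y.
Proof.
  intros h [t [ht ->]] [t' [ht' ->]]; simpl; intro e.
  assert (z : (t - t') * (fst b - fst a) = 0) by lra.
  apply Rmult_integral in z; destruct z as [z|z]; [|lra].
  replace t with t' by lra; reflexivity.
Qed.

Lemma seg_unique_y a b x y : snd a <> snd b ->
  on_seg a b x -> on_seg a b y -> snd x = snd y -> x = y.
Proof.
  intros h [t [ht ->]] [t' [ht' ->]]; simpl; intro e.
  assert (z : (t - t') * (snd b - snd a) = 0) by lra.
  apply Rmult_integral in z; destruct z as [z|z]; [|lra].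
  replace t with t' by lra; reflexivity.
Qed.

Lemma vertical_seg_x a b x : fst a = fst b -> on_seg a b x -> fst x = fst b.
Proof. intros h [t [_ ->]]; simpl; rewrite h; ring. Qed.

Lemma horizontal_seg_y a b x : snd a = snd b -> on_seg a b x -> snd x = snd b.
Proof. intros h [t [_ ->]]; simpl; rewrite h; ring. Qed.

Lemma on_seg_sub a b x y z : on_seg a b x -> on_seg a b y -> on_seg x y z -> on_seg a b z.
Proof.
  intros [t1 [h1 ->]] [t2 [h2 ->]] [l [hl ->]].
  exists (t1 + l * (t2 - t1)). split; [nra|]. unfold lerp; simpl; f_equal; ring.
Qed.

Lemma endpoint_of_subseg a b x y : a <> b ->
  on_seg a b x -> on_seg a b y -> on_seg x y b -> b = x \/ b = y.
Proof.
  intros hab [t1 [h1 ->]] [t2 [h2 ->]] [l [hl e]].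
  assert (E : lerp a b 1 = lerp a b (t1 + l * (t2 - t1))).
  { rewrite e at 1. unfold lerp; simpl; f_equal; ring. }
  apply lerp_inj in E; auto.
  destruct (Req_dec l 0) as [->|hl0].
  - left; replace t1 with 1 by lra. destruct a, b; unfold lerp; simpl; f_equal; ring.
  - right; replace t2 with 1 by nra. destruct a, b; unfold lerp; simpl; f_equal; ring.
Qed.

Lemma consecutive_meet_vertex p0 p1 p2 x : cross p0 p1 p2 <> 0 ->
  on_seg p0 p1 x -> on_seg p1 p2 x -> x = p1.
Proof.
  intros c [t [ht e1]] [s [hs e2]]; rewrite e1 in e2.
  destruct p0 as [a1 a2], p1 as [b1 b2], p2 as [c1 c2]; unfold lerp, cross in *; simpl in *.
  injection e2; intros ey ex.
  assert (E : (1 - t) * ((b1 - a1) * (c2 - a2) - (b2 - a2) * (c1 - a1)) =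
     - (((1 - t) * (a1 - b1) - s * (c1 - b1)) * (c2 - b2)
        - ((1 - t) * (a2 - b2) - s * (c2 - b2)) * (c1 - b1))) by ring.
  replace ((1 - t) * (a1 - b1) - s * (c1 - b1)) with 0 in E by lra.
  replace ((1 - t) * (a2 - b2) - s * (c2 - b2)) with 0 in E by lra.
  assert (z : (1 - t) * ((b1 - a1) * (c2 - a2) - (b2 - a2) * (c1 - a1)) = 0) by lra.
  apply Rmult_integral in z; destruct z as [z|z]; [|contradiction].
  rewrite e1; replace t with 1 by lra; f_equal; ring.
Qed.

Lemma collinear_consecutive p0 p1 p2 y1 y2 y3 : fst p0 <> fst p1 -> cross p0 p1 p2 = 0 ->
  on_seg p0 p1 y1 -> on_seg p0 p1 y2 -> on_seg p1 p2 y3 -> cross y1 y2 y3 = 0.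
Proof.
  intros h c [t1 [_ ->]] [t2 [_ ->]] [t3 [_ ->]].
  change (cross (lerp p0 p1 t1) (lerp p0 p1 t2) (lerp p1 p2 t3) = 0).
  pose proof (collinear_lerp p0 p1 p2 h c) as E.
  set (mu := (fst p2 - fst p0) / (fst p1 - fst p0)) in E.
  replace (lerp p1 p2 t3) with (lerp p0 p1 (1 + t3 * (mu - 1))).
  - apply cross_lerp_collinear.
  - rewrite E. unfold lerp; simpl; f_equal; ring.
Qed.

Lemma opposite_signs a c l : 0 < l < 1 -> (1 - l) * a + l * c = 0 ->
  a <> 0 -> c <> 0 -> a * c < 0.
Proof.
  intros hl h ha hc.
  assert (e : a * c * (1 - l) = - (l * (c * c))) by nra.
  assert (0 < c * c) by (apply Rsqr_pos_lt; auto).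
  destruct (Rlt_or_le (a * c) 0) as [|hac]; auto.
  assert (0 <= a * c * (1 - l)) by (apply Rmult_le_pos; lra). nra.
Qed.

Lemma sign_change a c : a * c < 0 ->
  a - c <> 0 /\ 0 < a / (a - c) < 1 /\ (1 - a / (a - c)) * a + a / (a - c) * c = 0.
Proof.
  intros h. assert (hd : a - c <> 0) by (intro E; replace a with c in h by lra; nra).
  split; [auto|split; [|field; auto]].
  destruct (Rlt_or_le 0 a).
  - assert (c < 0) by nra. split; [apply Rdiv_lt_0_compat; lra|].
    apply (Rmult_lt_reg_r (a - c)); [lra|]. field_simplify; lra.
  - assert (a < 0) by nra. assert (0 < c) by nra. split; [apply Rdiv_neg_neg; lra|].
    apply (Rmult_lt_reg_r (c - a)); [lra|].
    replace (a / (a - c) * (c - a)) with (- a) by (field; lra). lra.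
Qed.

Lemma strictly_between_lerp (a b c : R) : a < b < c \/ c < b < a ->
  exists l, 0 < l < 1 /\ b = a + l * (c - a).
Proof.
  intros h. exists ((b - a) / (c - a)). split; [|field; destruct h; lra].
  destruct h as [[h1 h2]|[h1 h2]]; split.
  - apply Rdiv_lt_0_compat; lra.
  - apply (Rmult_lt_reg_r (c - a)); [lra|]. field_simplify; lra.
  - apply Rdiv_neg_neg; lra.
  - apply (Rmult_lt_reg_r (a - c)); [lra|].
    replace ((b - a) / (c - a) * (a - c)) with (a - b) by (field; lra). lra.
Qed.

Lemma same_sign_trans a b c : a * b > 0 -> b * c > 0 -> a * c > 0.
Proof.
  intros h1 h2. assert (a * b * (b * c) > 0) by (apply Rmult_gt_0_compat; auto).
  assert (b * b > 0) by nra. nra.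
Qed.

Definition aligned (a b : point) : Prop := fst a = fst b \/ snd a = snd b.

Lemma aligned_lerp_l a b l : aligned a b -> aligned (lerp a b l) b.
Proof. unfold aligned, lerp; simpl; intros [h|h]; [left|right]; rewrite h; ring. Qed.

Lemma aligned_lerp_r a b l : aligned a b -> aligned a (lerp a b l).
Proof. unfold aligned, lerp; simpl; intros [h|h]; [left|right]; rewrite h; ring. Qed.

Section Rectangle.
Variables x0 x1 y0 y1 : R.

Definition in_rect (z : point) : Prop := x0 <= fst z <= x1 /\ y0 <= snd z <= y1.
Definition on_border (z : point) : Prop :=
  fst z = x0 \/ fst z = x1 \/ snd z = y0 \/ snd z = y1.

Lemma in_rect_lerp a b l : in_rect a -> in_rect b -> 0 <= l <= 1 -> in_rect (lerp a b l).
Proof.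
  unfold in_rect, lerp; simpl; intros [[a1 a2] [a3 a4]] [[b1 b2] [b3 b4]] hl.
  repeat split; nra.
Qed.

Lemma border_inside_aligned a b l : in_rect a -> in_rect b -> 0 < l < 1 ->
  on_border (lerp a b l) -> aligned a b.
Proof.
  unfold in_rect, on_border, aligned, lerp; simpl.
  intros [[a1 a2] [a3 a4]] [[b1 b2] [b3 b4]] hl h.
  destruct h as [h|[h|[h|h]]]; [left|left|right|right]; nra.
Qed.

Lemma chord_contains u w z : in_rect u -> in_rect w -> in_rect z ->
  on_border u -> on_border w -> ~ aligned u w -> cross u w z = 0 -> on_seg u w z.
Proof.
  intros iu iw iz bu bw nuw hc.
  assert (hx : fst u <> fst w) by (intro; apply nuw; left; auto).
  pose proof (collinear_lerp u w z hx hc) as E.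
  set (t := (fst z - fst u) / (fst w - fst u)) in E.
  exists t; split; [|exact E].
  destruct (Rlt_or_le t 0) as [ht|ht].
  - exfalso. destruct (lerp_before u w t ht) as [eu hl]. rewrite <- E in eu.
    apply nuw; rewrite eu; apply aligned_lerp_l, (border_inside_aligned _ _ _ iz iw hl).
    rewrite <- eu; exact bu.
  - split; [exact ht|]. destruct (Rle_or_lt t 1) as [|ht']; [assumption|exfalso].
    destruct (lerp_after u w t ht') as [ew hl]. rewrite <- E in ew.
    apply nuw; rewrite ew; apply aligned_lerp_r, (border_inside_aligned _ _ _ iu iz hl).
    rewrite <- ew; exact bw.
Qed.

Lemma chord_border_points u w z : in_rect u -> in_rect w -> in_rect z ->
  on_border u -> on_border w -> on_border z -> ~ aligned u w -> cross u w z = 0 ->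
  z = u \/ z = w.
Proof.
  intros iu iw iz bu bw bz nuw hc.
  destruct (chord_contains u w z iu iw iz bu bw nuw hc) as [t [ht ->]].
  destruct (Req_dec t 0) as [->|h0].
  { left; destruct u; unfold lerp; simpl; f_equal; ring. }
  destruct (Req_dec t 1) as [->|h1].
  { right; destruct u, w; unfold lerp; simpl; f_equal; ring. }
  exfalso; apply nuw, (border_inside_aligned u w t iu iw); auto; lra.
Qed.

Lemma diagonal_three_border a b z1 z2 z3 : ~ aligned a b ->
  on_seg a b z1 -> on_seg a b z2 -> on_seg a b z3 ->
  in_rect z1 -> in_rect z2 -> in_rect z3 ->
  on_border z1 -> on_border z2 -> on_border z3 -> z1 = z2 \/ z1 = z3 \/ z2 = z3.
Proof.
  intros nab h1 h2 h3 i1 i2 i3 b1 b2 b3.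
  destruct (classic (z1 = z2)) as [|n12]; [left; auto|right].
  assert (n : ~ aligned z1 z2).
  { intros [e|e]; apply n12;
      [apply (seg_unique_x a b) | apply (seg_unique_y a b)]; auto;
      intro E; apply nab; [left|right]; auto. }
  assert (hc : cross z1 z2 z3 = 0).
  { destruct h1 as [t1 [_ ->]], h2 as [t2 [_ ->]], h3 as [t3 [_ ->]].
    apply (cross_lerp_collinear a b t1 t2 t3). }
  destruct (chord_border_points z1 z2 z3 i1 i2 i3 b1 b2 b3 n hc); auto.
Qed.

Lemma corner_separates u c a b : in_rect u -> in_rect a -> in_rect b ->
  (fst c = x0 \/ fst c = x1) -> (snd c = y0 \/ snd c = y1) ->
  ~ aligned u c -> fst a = fst c -> snd a <> snd c -> snd b = snd c -> fst b <> fst c ->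
  cross u c a * cross u c b < 0.
Proof.
  unfold in_rect, aligned, cross.
  destruct u as [u1 u2], c as [c1 c2], a as [a1 a2], b as [b1 b2]; simpl.
  intros iu ia ib hcx hcy nuc ea na eb nb; subst a1 b2.
  assert (sx : (c1 - u1) * (c1 - b1) > 0) by (destruct hcx; subst; nra).
  assert (sy : (c2 - u2) * (c2 - a2) > 0) by (destruct hcy; subst; nra).
  replace (((c1 - u1) * (a2 - u2) - (c2 - u2) * (c1 - u1)) *
           ((c1 - u1) * (c2 - u2) - (c2 - u2) * (b1 - u1)))
    with (- (((c1 - u1) * (c1 - b1)) * ((c2 - u2) * (c2 - a2)))) by ring.
  nra.
Qed.

End Rectangle.

Open Scope nat_scope.

Section Matching.
(* mu is a perfect matching of {0, ..., M-1} given as a fixed-point-free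
   involution, which never matches two consecutive numbers. *)
Variables (M : nat) (mu : nat -> nat).
Hypothesis mu_range : forall s, s < M -> mu s < M.
Hypothesis mu_invol : forall s, s < M -> mu (mu s) = s.
Hypothesis mu_no_fix : forall s, s < M -> mu s <> s.
Hypothesis mu_not_next : forall s, s < M -> mu s <> S s.

(* Such a matching has two interleaving pairs i < k < mu i < mu k: inside a
   pair of minimal span, the successor of its left end is matched outside. *)
Lemma matching_interleaves : 0 < M ->
  (forall i k, i < k -> k < mu i -> mu i < mu k -> mu k < M -> False) -> False.
Proof.
  intros hM no_cross.
  assert (span : forall d i, i < M -> i < mu i -> mu i - i <= d -> False).
  { induction d as [|d IH]; intros i hi hlt hd; [lia|].
    assert (mu i <> S i) by auto.
    assert (hmi := mu_range i hi).
    assert (hk : S i < M) by lia.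
    assert (hmk := mu_range (S i) hk).
    destruct (Nat.lt_total (mu (S i)) i) as [c1|[c1|c1]].
    - assert (e : mu (mu (S i)) = S i) by auto.
      apply (no_cross (mu (S i)) i); rewrite ?e; lia.
    - assert (e : mu (mu (S i)) = S i) by auto. rewrite c1 in e. lia.
    - assert (mu (S i) <> S i) by auto.
      destruct (Nat.lt_total (mu (S i)) (mu i)) as [c2|[c2|c2]].
      + apply (IH (S i)); lia.
      + assert (e := mu_invol (S i) hk). rewrite c2, (mu_invol i hi) in e. lia.
      + apply (no_cross i (S i)); lia. }
  assert (mu 0 <> 0) by auto.
  apply (span (mu 0) 0); lia.
Qed.

End Matching.

Section Coordinates.
Variables (N : nat) (f : nat -> nat).
Hypothesis f_incr : forall r r', r < r' -> r' < N -> f r < f r'.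

Definition coord (r : nat) : R := INR (f r).

Lemma coord_lt r r' : r < r' -> r' < N -> (coord r < coord r')%R.
Proof. intros; apply lt_INR; auto. Qed.

Lemma coord_le r r' : r <= r' -> r' < N -> (coord r <= coord r')%R.
Proof.
  intros h hN. destruct (Nat.eq_dec r r') as [->|]; [lra|].
  left; apply coord_lt; lia.
Qed.

Lemma coord_inj r r' : r < N -> r' < N -> coord r = coord r' -> r = r'.
Proof.
  intros h h' e. destruct (Nat.lt_total r r') as [c|[c|c]]; auto;
    [pose proof (coord_lt r r' c h') | pose proof (coord_lt r' r c h)]; lra.
Qed.

Lemma coord_neq r r' : r < N -> r' < N -> r <> r' -> coord r <> coord r'.
Proof. intros h h' n e; apply n, coord_inj; auto. Qed.

Lemma coord_gap r t z : S r < N -> t < N -> (coord r < z < coord (S r))%R -> z <> coord t.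
Proof.
  intros h ht hz ->. destruct (Nat.le_gt_cases t r).
  - pose proof (coord_le t r ltac:(lia) ltac:(lia)); lra.
  - pose proof (coord_le (S r) t ltac:(lia) ltac:(lia)); lra.
Qed.

Lemma coord_open_step r r' t l : r' = S r \/ r = S r' -> r < N -> r' < N -> t < N ->
  (0 < l < 1)%R -> (coord r + l * (coord r' - coord r))%R <> coord t.
Proof.
  intros [->| ->] h h' ht hl.
  - pose proof (coord_lt r (S r) ltac:(lia) h').
    apply (coord_gap r); auto. split; nra.
  - pose proof (coord_lt r' (S r') ltac:(lia) h).
    apply (coord_gap r'); auto. split; nra.
Qed.

End Coordinates.

Section BorderWalk.
(* The columns al 0 < ... < al (P+1) and rows be 0 < ... < be (Q+1) span a
   (P+2) x (Q+2) subgrid; its border points are enumerated clockwise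
   from the bottom-left corner: up the left side, right along the top, down
   the right side, left along the bottom. *)
Variables (P Q : nat) (al be : nat -> nat).
Hypothesis al_incr : forall r r', r < r' -> r' < P + 2 -> al r < al r'.
Hypothesis be_incr : forall r r', r < r' -> r' < Q + 2 -> be r < be r'.

Definition walk_len : nat := 2 * P + 2 * Q + 4.

Definition walk_col (s : nat) : nat :=
  if s <? Q + 2 then 0
  else if s <? Q + P + 3 then s - (Q + 1)
  else if s <? 2 * Q + P + 4 then P + 1
  else 2 * Q + 2 * P + 4 - s.

Definition walk_row (s : nat) : nat :=
  if s <? Q + 2 then s
  else if s <? Q + P + 3 then Q + 1
  else if s <? 2 * Q + P + 4 then 2 * Q + P + 3 - s
  else 0.

Definition walk (s : nat) : point := (coord al (walk_col s), coord be (walk_row s)).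

Local Notation wx0 := (coord al 0).
Local Notation wx1 := (coord al (P + 1)).
Local Notation wy0 := (coord be 0).
Local Notation wy1 := (coord be (Q + 1)).
Local Notation in_wrect := (in_rect wx0 wx1 wy0 wy1).
Local Notation on_wborder := (on_border wx0 wx1 wy0 wy1).

Ltac walk_cases s :=
  unfold walk_len, walk_col, walk_row;
  destruct (Nat.ltb_spec s (Q + 2)); [|destruct (Nat.ltb_spec s (Q + P + 3));
    [|destruct (Nat.ltb_spec s (2 * Q + P + 4))]]; cbv iota.

Ltac split_lia := lazymatch goal with
  | |- _ /\ _ => split; split_lia
  | |- _ \/ _ => first [left; split_lia | right; split_lia]
  | _ => lia end.

Lemma walk_index_bound s : s < walk_len -> walk_col s < P + 2 /\ walk_row s < Q + 2.
Proof. walk_cases s; intros; split_lia. Qed.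

Lemma walk_index_border s : s < walk_len ->
  walk_col s = 0 \/ walk_col s = P + 1 \/ walk_row s = 0 \/ walk_row s = Q + 1.
Proof. walk_cases s; intros; split_lia. Qed.

Lemma walk_index_inj s t : s < walk_len -> t < walk_len ->
  walk_col s = walk_col t -> walk_row s = walk_row t -> s = t.
Proof. walk_cases s; walk_cases t; intros; split_lia. Qed.

Lemma walk_index_step s : S s < walk_len ->
  (walk_col s = walk_col (S s) /\ (walk_col s = 0 \/ walk_col s = P + 1) /\
   (walk_row (S s) = S (walk_row s) \/ walk_row s = S (walk_row (S s)))) \/
  (walk_row s = walk_row (S s) /\ (walk_row s = 0 \/ walk_row s = Q + 1) /\
   (walk_col (S s) = S (walk_col s) \/ walk_col s = S (walk_col (S s)))).
Proof. walk_cases s; walk_cases (S s); intros; split_lia. Qed.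

Lemma walk_index_local j : 0 < j -> S j < walk_len ->
  (walk_col (j - 1) = walk_col j /\ walk_col j = walk_col (S j) /\
   ((walk_row j = S (walk_row (j - 1)) /\ walk_row (S j) = S (walk_row j)) \/
    (walk_row (j - 1) = S (walk_row j) /\ walk_row j = S (walk_row (S j))))) \/
  (walk_row (j - 1) = walk_row j /\ walk_row j = walk_row (S j) /\
   ((walk_col j = S (walk_col (j - 1)) /\ walk_col (S j) = S (walk_col j)) \/
    (walk_col (j - 1) = S (walk_col j) /\ walk_col j = S (walk_col (S j))))) \/
  ((walk_col j = 0 \/ walk_col j = P + 1) /\ (walk_row j = 0 \/ walk_row j = Q + 1) /\
   ((walk_col (j - 1) = walk_col j /\ walk_row (j - 1) <> walk_row j /\
     walk_row (S j) = walk_row j /\ walk_col (S j) <> walk_col j) \/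
    (walk_row (j - 1) = walk_row j /\ walk_col (j - 1) <> walk_col j /\
     walk_col (S j) = walk_col j /\ walk_row (S j) <> walk_row j))).
Proof. walk_cases (j - 1); walk_cases j; walk_cases (S j); intros; split_lia. Qed.

Lemma walk_in_rect s : s < walk_len -> in_wrect (walk s).
Proof.
  intros h. destruct (walk_index_bound s h).
  unfold in_rect, walk; simpl.
  repeat split; [apply (coord_le (P + 2)) | apply (coord_le (P + 2))
                | apply (coord_le (Q + 2)) | apply (coord_le (Q + 2))]; auto; lia.
Qed.

Lemma walk_on_border s : s < walk_len -> on_wborder (walk s).
Proof.
  intros h. unfold on_border, walk; simpl.
  destruct (walk_index_border s h) as [e|[e|[e|e]]]; rewrite e; auto.
Qed.

Lemma walk_inj s t : s < walk_len -> t < walk_len -> walk s = walk t -> s = t.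
Proof.
  intros hs ht e. destruct (walk_index_bound s hs), (walk_index_bound t ht).
  unfold walk in e; injection e; intros e2 e1.
  apply walk_index_inj; auto; [apply (coord_inj (P + 2) al) | apply (coord_inj (Q + 2) be)]; auto.
Qed.

Lemma walk_step_open s l : S s < walk_len -> (0 < l < 1)%R ->
  on_wborder (lerp (walk s) (walk (S s)) l) /\
  forall t, t < walk_len -> lerp (walk s) (walk (S s)) l <> walk t.
Proof.
  intros hs hl.
  destruct (walk_index_bound s ltac:(lia)), (walk_index_bound (S s) hs).
  unfold on_border, lerp, walk; simpl.
  destruct (walk_index_step s hs) as [[ec [eb ed]]|[er [eb ed]]].
  - rewrite <- ec. replace (coord al (walk_col s) + l * (coord al (walk_col s) - coord al (walk_col s)))%R
      with (coord al (walk_col s)) by ring.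
    split; [destruct eb as [-> | ->]; auto|].
    intros t ht e; injection e; intros ey _.
    destruct (walk_index_bound t ht).
    apply (coord_open_step (Q + 2) be be_incr (walk_row s) (walk_row (S s)) (walk_row t) l);
      auto; lia.
  - rewrite <- er. replace (coord be (walk_row s) + l * (coord be (walk_row s) - coord be (walk_row s)))%R
      with (coord be (walk_row s)) by ring.
    split; [destruct eb as [-> | ->]; auto|].
    intros t ht e; injection e; intros _ ex.
    destruct (walk_index_bound t ht).
    apply (coord_open_step (P + 2) al al_incr (walk_col s) (walk_col (S s)) (walk_col t) l);
      auto; lia.
Qed.

Section Chord.
Variables i j : nat.
Hypothesis hi : i < walk_len.
Hypothesis hj : j < walk_len.
Hypothesis chord_diag : ~ aligned (walk i) (walk j).

Definition side (s : nat) : R := cross (walk i) (walk j) (walk s).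

Lemma side_nonzero s : s < walk_len -> s <> i -> s <> j -> side s <> 0%R.
Proof.
  intros hs ni nj e.
  destruct (chord_border_points wx0 wx1 wy0 wy1 (walk i) (walk j) (walk s)) as [E|E];
    auto using walk_in_rect, walk_on_border; apply walk_inj in E; auto.
Qed.

(* The line of the chord can only be crossed at a walk point. *)
Lemma side_step s : S s < walk_len -> s <> i -> s <> j -> S s <> i -> S s <> j ->
  (side s * side (S s) > 0)%R.
Proof.
  intros hs n1 n2 n3 n4.
  assert (g1 := side_nonzero s ltac:(lia) n1 n2). assert (g2 := side_nonzero (S s) hs n3 n4).
  destruct (Rlt_or_le 0 (side s * side (S s))) as [|h]; [assumption|exfalso].
  assert (neg : (side s * side (S s) < 0)%R).
  { destruct h as [|h]; auto. apply Rmult_integral in h; tauto. }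
  destruct (sign_change _ _ neg) as [_ [hl hz]].
  set (l := (side s / (side s - side (S s)))%R) in *.
  destruct (walk_step_open s l hs hl) as [bX nX].
  destruct (chord_border_points wx0 wx1 wy0 wy1 (walk i) (walk j) (lerp (walk s) (walk (S s)) l))
    as [E|E]; auto using walk_in_rect, walk_on_border.
  - apply in_rect_lerp; auto using walk_in_rect with arith; lra.
  - rewrite cross_lerp; exact hz.
  - apply (nX i hi E).
  - apply (nX j hj E).
Qed.

Lemma side_flip : i < j -> 0 < j -> S j < walk_len -> j - 1 <> i ->
  (side (j - 1) * side (S j) < 0)%R.
Proof.
  intros hij h0 hS hne.
  assert (ga := side_nonzero (j - 1) ltac:(lia) hne ltac:(lia)).
  assert (gb := side_nonzero (S j) hS ltac:(lia) ltac:(lia)).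
  assert (self : side j = 0%R) by (unfold side, cross; ring).
  destruct (walk_index_bound (j - 1) ltac:(lia)), (walk_index_bound j hj),
    (walk_index_bound (S j) hS).
  destruct (walk_index_local j h0 hS) as [[e1 [e2 e3]]|[[e1 [e2 e3]]|[cx [cy turn]]]].
  - destruct (strictly_between_lerp (coord be (walk_row (j - 1))) (coord be (walk_row j))
                (coord be (walk_row (S j)))) as [l [hl el]].
    { destruct e3 as [[f1 f2]|[f1 f2]]; [left|right]; rewrite ?f1, ?f2 in *;
        split; apply (coord_lt (Q + 2)); auto; lia. }
    assert (ej : walk j = lerp (walk (j - 1)) (walk (S j)) l).
    { unfold walk, lerp; simpl. rewrite <- el, e1, <- e2. f_equal; ring. }
    apply (opposite_signs _ _ l); auto.
    unfold side; rewrite <- cross_lerp, <- ej; exact self.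
  - destruct (strictly_between_lerp (coord al (walk_col (j - 1))) (coord al (walk_col j))
                (coord al (walk_col (S j)))) as [l [hl el]].
    { destruct e3 as [[f1 f2]|[f1 f2]]; [left|right]; rewrite ?f1, ?f2 in *;
        split; apply (coord_lt (P + 2)); auto; lia. }
    assert (ej : walk j = lerp (walk (j - 1)) (walk (S j)) l).
    { unfold walk, lerp; simpl. rewrite <- el, e1, <- e2. f_equal; ring. }
    apply (opposite_signs _ _ l); auto.
    unfold side; rewrite <- cross_lerp, <- ej; exact self.
  - assert (iprev := walk_in_rect (j - 1) ltac:(lia)).
    assert (inext := walk_in_rect (S j) hS).
    destruct turn as [[ca [ra [rb cb]]]|[ra [ca [cb rb]]]]; [|rewrite Rmult_comm];
      apply (corner_separates wx0 wx1 wy0 wy1); auto using walk_in_rect; unfold walk; simpl;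
      try (destruct cx as [-> | ->]; auto; fail); try (destruct cy as [-> | ->]; auto; fail);
      rewrite ?ca, ?ra, ?cb, ?rb; auto;
      first [apply (coord_neq (P + 2) al) | apply (coord_neq (Q + 2) be)]; auto.
Qed.

Lemma side_arc d s : s + d < walk_len ->
  (forall t, s <= t <= s + d -> t <> i /\ t <> j) -> (side s * side (s + d) > 0)%R.
Proof.
  revert s; induction d as [|d IH]; intros s h1 h2.
  - rewrite Nat.add_0_r. destruct (h2 s ltac:(lia)).
    assert (side s <> 0%R) by (apply side_nonzero; auto; lia).
    assert (0 < side s * side s)%R by (apply Rsqr_pos_lt; auto). lra.
  - assert (A := IH s ltac:(lia) ltac:(intros; apply h2; lia)).
    destruct (h2 (s + d) ltac:(lia)), (h2 (S (s + d)) ltac:(lia)).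
    assert (B := side_step (s + d) ltac:(lia) H H0 H1 H2).
    replace (s + S d) with (S (s + d)) by lia. apply (same_sign_trans _ (side (s + d))); auto.
Qed.

Lemma side_interleave k l : i < k -> k < j -> j < l -> l < walk_len ->
  (side k * side l < 0)%R.
Proof.
  intros h1 h2 h3 h4.
  assert (A := side_arc (j - 1 - k) k ltac:(lia) ltac:(intros; lia)).
  replace (k + (j - 1 - k)) with (j - 1) in A by lia.
  assert (B := side_arc (l - S j) (S j) ltac:(lia) ltac:(intros; lia)).
  replace (S j + (l - S j)) with l in B by lia.
  assert (C := side_flip ltac:(lia) ltac:(lia) ltac:(lia) ltac:(lia)).
  assert (D : (side k * side (j - 1) * (side (j - 1) * side (S j)) * (side (S j) * side l) < 0)%R).
  { apply Rmult_neg_pos; [apply Rmult_pos_neg|]; lra. }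
  assert (0 < side (j - 1) * side (j - 1))%R by (apply Rsqr_pos_lt; intro E; rewrite E in C; lra).
  assert (0 < side (S j) * side (S j))%R by (apply Rsqr_pos_lt; intro E; rewrite E in C; lra).
  replace (side k * side (j - 1) * (side (j - 1) * side (S j)) * (side (S j) * side l))%R with
    ((side k * side l) * (side (j - 1) * side (j - 1)) * (side (S j) * side (S j)))%R in D by ring.
  destruct (Rlt_or_le (side k * side l) 0); auto.
  assert (0 <= side k * side l * (side (j - 1) * side (j - 1)) * (side (S j) * side (S j)))%R
    by (apply Rmult_le_pos; [apply Rmult_le_pos|]; lra).
  lra.
Qed.

Lemma chord_meets k l : k < walk_len -> l < walk_len -> (side k * side l < 0)%R ->
  exists x, on_seg (walk i) (walk j) x /\ on_seg (walk k) (walk l) x.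
Proof.
  intros hk hl h.
  destruct (sign_change _ _ h) as [_ [hlam hz]].
  set (lam := (side k / (side k - side l))%R) in *.
  exists (lerp (walk k) (walk l) lam). split.
  - apply (chord_contains wx0 wx1 wy0 wy1);
      auto using walk_in_rect, walk_on_border.
    + apply in_rect_lerp; auto using walk_in_rect; lra.
    + rewrite cross_lerp; exact hz.
  - exists lam; split; [lra | reflexivity].
Qed.

End Chord.

(* The walk points cannot be perfectly matched by pairwise disjoint
   non-aligned segments: the matching would have to interleave somewhere. *)
Theorem no_disjoint_chord_matching (mu : nat -> nat) :
  (forall s, s < walk_len -> mu s < walk_len) ->
  (forall s, s < walk_len -> mu (mu s) = s) ->
  (forall s, s < walk_len -> mu s <> s) ->
  (forall s, s < walk_len -> ~ aligned (walk s) (walk (mu s))) ->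
  (forall s t, s < walk_len -> t < walk_len -> t <> s -> t <> mu s -> forall x,
      on_seg (walk s) (walk (mu s)) x -> on_seg (walk t) (walk (mu t)) x -> False) -> False.
Proof.
  intros hr hinv hfix hdiag hdisj.
  apply (matching_interleaves walk_len mu); auto; [| unfold walk_len; lia |].
  - intros s hs e. assert (hS : S s < walk_len) by (rewrite <- e; auto).
    apply (hdiag s hs). rewrite e. unfold aligned, walk; simpl.
    destruct (walk_index_step s hS) as [[e1 _]|[e1 _]]; rewrite e1; auto.
  - intros a k h1 h2 h3 h4.
    assert (ha : a < walk_len) by lia.
    destruct (chord_meets a (mu a) ha (hr a ha) (hdiag a ha) k (mu k) ltac:(lia) h4
                (side_interleave a (mu a) ha (hr a ha) (hdiag a ha) k (mu k) h1 h2 h3 h4))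
      as [x [x1 x2]].
    exact (hdisj a k ha ltac:(lia) ltac:(lia) ltac:(lia) x x1 x2).
Qed.

End BorderWalk.

Definition holds (A : Prop) : bool := if excluded_middle_informative A then true else false.

Lemma holds_true (A : Prop) : holds A = true <-> A.
Proof. unfold holds; destruct excluded_middle_informative; split; auto; discriminate. Qed.

Lemma holds_false (A : Prop) : holds A = false <-> ~ A.
Proof. unfold holds; destruct excluded_middle_informative; split; auto; try discriminate; tauto. Qed.

Lemma holds_iff (A B : Prop) : (A <-> B) -> holds A = holds B.
Proof. unfold holds; intros h; do 2 destruct excluded_middle_informative; auto; tauto. Qed.

Lemma holds_or (A B : Prop) : holds (A \/ B) = (holds A || holds B)%bool.
Proof. unfold holds; do 3 destruct excluded_middle_informative; auto; tauto. Qed.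

Lemma inj_length_le {A B} (f : A -> B) (l : list A) (l' : list B) : NoDup l ->
  (forall x y, In x l -> In y l -> f x = f y -> x = y) ->
  (forall x, In x l -> In (f x) l') -> length l <= length l'.
Proof.
  intros hl hinj hin. rewrite <- (length_map f l).
  apply NoDup_incl_length.
  - apply NoDup_map_NoDup_ForallPairs; auto.
  - intros y hy. apply in_map_iff in hy. destruct hy as [x [<- hx]]; auto.
Qed.

Lemma filter_or_le {A} (f g : A -> bool) (l : list A) :
  length (filter (fun x => f x || g x)%bool l) <= length (filter f l) + length (filter g l).
Proof. induction l as [|a l IH]; simpl; auto. destruct (f a), (g a); simpl; lia. Qed.

Lemma filter_filter_le {A} (f g : A -> bool) (l : list A) :
  length (filter f (filter g l)) <= length (filter f l).
Proof. induction l as [|a l IH]; simpl; auto. destruct (g a); simpl; destruct (f a); simpl; lia. Qed.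

Lemma filter_filter {A} (f g : A -> bool) (l : list A) :
  filter g (filter f l) = filter (fun x => f x && g x)%bool l.
Proof.
  induction l as [|a l IH]; simpl; auto.
  destruct (f a); simpl; auto. destruct (g a); simpl; rewrite IH; auto.
Qed.

Lemma filter_unique_le {A} (f : A -> bool) (l : list A) : NoDup l ->
  (forall x y, In x l -> In y l -> f x = true -> f y = true -> x = y) ->
  length (filter f l) <= 1.
Proof.
  induction 1 as [|a l na hl IH]; simpl; intros h; auto.
  destruct (f a) eqn:E; simpl.
  - destruct (filter f l) as [|b r] eqn:F; simpl; [lia|exfalso].
    assert (hb : In b (filter f l)) by (rewrite F; left; auto).
    apply filter_In in hb; destruct hb as [hb fb].
    assert (b = a) by (apply h; simpl; auto). subst; auto.
  - apply IH. intros; apply h; simpl; auto.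
Qed.

Section Fibers.
Variable F : nat -> nat.

Definition fiber (d : nat) (S : list nat) : list nat := filter (fun s => F s =? d) S.

Lemma fiber_sub d S g : length (fiber d (filter g S)) <= length (fiber d S).
Proof. apply filter_filter_le. Qed.

Lemma fiber_bound : forall D S, NoDup D -> (forall s, In s S -> In (F s) D) ->
  (forall d, length (fiber d S) <= 2) -> length S <= 2 * length D.
Proof.
  induction D as [|d D IH]; intros S hD hin hc.
  - destruct S as [|s S]; simpl; auto. destruct (hin s); simpl; auto.
  - inversion hD as [|? ? nd hD']; subst; simpl.
    pose proof (filter_length (fun s => F s =? d) S) as split.
    assert (length (filter (fun s => negb (F s =? d)) S) <= 2 * length D); [|specialize (hc d); unfold fiber in hc; lia].
    apply IH; auto.
    + intros s hs. apply filter_In in hs. destruct hs as [h1 h2].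
      destruct (hin s h1) as [e|]; auto. subst. rewrite Nat.eqb_refl in h2. discriminate.
    + intros d'. eapply Nat.le_trans; [apply fiber_sub | apply hc].
Qed.

Lemma fiber_full D S : NoDup D -> (forall s, In s S -> In (F s) D) ->
  (forall d, length (fiber d S) <= 2) -> length S = 2 * length D ->
  forall d, In d D -> length (fiber d S) = 2.
Proof.
  intros hD hin hc hl d hd.
  set (D' := filter (fun x => negb (x =? d)) D).
  assert (hD' : length D' + 1 <= length D).
  { pose proof (filter_length (fun x => x =? d) D) as e.
    destruct (filter (fun x => x =? d) D) eqn:E; [|simpl in e; unfold D'; lia].
    assert (h : In d (filter (fun x => x =? d) D)) by (apply filter_In; rewrite Nat.eqb_refl; auto).
    rewrite E in h; destruct h. }
  assert (rest : length (filter (fun s => negb (F s =? d)) S) <= 2 * length D').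
  { apply fiber_bound; [apply NoDup_filter; auto| |].
    - intros s hs. apply filter_In in hs; destruct hs as [h1 h2].
      apply filter_In; split; auto.
    - intros d'. eapply Nat.le_trans; [apply fiber_sub | apply hc]. }
  pose proof (filter_length (fun s => F s =? d) S). specialize (hc d). unfold fiber in *. lia.
Qed.

End Fibers.

Lemma filter_seq_sorted (f : nat -> bool) : forall n a, StronglySorted lt (filter f (seq a n)).
Proof.
  induction n as [|n IH]; intros a; simpl; [constructor|].
  destruct (f a); simpl; auto. constructor; auto.
  apply Forall_forall. intros x hx. apply filter_In in hx. destruct hx as [hx _].
  apply in_seq in hx. lia.
Qed.

Lemma sorted_nth_lt (l : list nat) : StronglySorted lt l ->
  forall r r', r < r' -> r' < length l -> nth r l 0 < nth r' l 0.
Proof.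
  induction 1 as [|a l hl IH ha]; intros r r' h1 h2; simpl in *; [lia|].
  destruct r, r'; try lia.
  - rewrite Forall_forall in ha. apply ha, nth_In. lia.
  - apply IH; lia.
Qed.

Section LineRuns.
(* Segments 1..k of a path; [axial i] says segment i is parallel to a fixed
   axis, and [on_line i c] that it lies on the c-th grid line parallel to
   that axis.  Two consecutive axial segments share an endpoint, hence lie
   on the same line. *)
Variables (k N : nat) (axial : nat -> Prop) (on_line : nat -> nat -> Prop).
Hypothesis on_line_axial : forall i c, on_line i c -> axial i.
Hypothesis on_line_fun : forall i c c', on_line i c -> on_line i c' -> c = c'.
Hypothesis on_line_run : forall i c, axial i -> on_line (S i) c -> on_line i c.

Definition used_by (j c : nat) : Prop := exists i, 1 <= i <= j /\ on_line i c.

Definition n_used (j : nat) : nat := length (filter (fun c => holds (used_by j c)) (seq 1 N)).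
Definition n_axial (j : nat) : nat := length (filter (fun i => holds (axial i)) (seq 1 j)).
Definition n_other (j : nat) : nat := length (filter (fun i => negb (holds (axial i))) (seq 1 j)).

Lemma used_le_axial : n_used k <= n_axial k.
Proof.
  set (pick c := epsilon (inhabits 0) (fun i => 1 <= i <= k /\ on_line i c)).
  assert (hpick : forall c, used_by k c -> 1 <= pick c <= k /\ on_line (pick c) c)
    by (intros c h; apply (epsilon_spec (inhabits 0) _ h)).
  apply (inj_length_le pick); [apply NoDup_filter, seq_NoDup | |].
  - intros x y hx hy e. apply filter_In in hx, hy.
    destruct hx as [_ hx], hy as [_ hy]. rewrite holds_true in hx, hy.
    apply (on_line_fun (pick x)); [apply hpick; auto | rewrite e; apply hpick; auto].
  - intros x hx. apply filter_In in hx. destruct hx as [_ hx]. rewrite holds_true in hx.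
    destruct (hpick x hx) as [h1 h2].
    apply filter_In; split; [apply in_seq; lia | apply holds_true; eauto].
Qed.

Lemma n_used_step_le j : n_used (S j) <= n_used j + 1.
Proof.
  unfold n_used.
  rewrite (filter_ext _ (fun c => holds (used_by j c) || holds (on_line (S j) c))%bool).
  - eapply Nat.le_trans; [apply filter_or_le|].
    enough (length (filter (fun c => holds (on_line (S j) c)) (seq 1 N)) <= 1) by lia.
    apply filter_unique_le; [apply seq_NoDup|].
    intros x y _ _ hx hy. rewrite holds_true in hx, hy. eauto.
  - intros c. rewrite <- holds_or. apply holds_iff. split.
    + intros [i [hi hl]]. destruct (Nat.eq_dec i (S j)) as [->|ne]; [right; auto|].
      left; exists i; split; auto; lia.
    + intros [[i [hi hl]]|hl]; [exists i | exists (S j)]; split; auto; lia.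
Qed.

Lemma n_used_step_eq j : ~ axial (S j) \/ (1 <= j /\ axial j) -> n_used (S j) = n_used j.
Proof.
  intros h. unfold n_used. f_equal. apply filter_ext. intros c. apply holds_iff. split.
  - intros [i [hi hl]]. destruct (Nat.eq_dec i (S j)) as [->|ne].
    + destruct h as [h|[h1 h2]]; [exfalso; eauto|]. exists j; split; auto.
    + exists i; split; auto; lia.
  - intros [i [hi hl]]; exists i; split; auto; lia.
Qed.

Lemma n_other_step j : n_other (S j) = n_other j + (if holds (axial (S j)) then 0 else 1).
Proof.
  unfold n_other. rewrite seq_S, filter_app, length_app. simpl.
  replace (1 + j) with (S j) by lia. destruct (holds (axial (S j))); simpl; lia.
Qed.

(* Reading the path from the start, a new line can only be entered after a
   non-axial segment (or at the very beginning). *)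
Lemma n_used_prefix j :
  n_used j <= n_other j + (match j with 0 => 0 | S _ => if holds (axial j) then 1 else 0 end).
Proof.
  induction j as [|j IH].
  - unfold n_used. rewrite (filter_ext _ (fun _ => false)), filter_false; simpl; [lia|].
    intros c. apply holds_false. intros [i [hi _]]; lia.
  - rewrite n_other_step.
    destruct (holds (axial (S j))) eqn:a1.
    + rewrite holds_true in a1.
      destruct j as [|j']; [pose proof (n_used_step_le 0); simpl in *; lia|].
      destruct (holds (axial (S j'))) eqn:a0.
      * rewrite holds_true in a0. rewrite n_used_step_eq; [lia | right; split; auto; lia].
      * pose proof (n_used_step_le (S j')). lia.
    + rewrite holds_false in a1. rewrite n_used_step_eq; [|left; auto].
      destruct j as [|j']; [lia | destruct (holds (axial (S j'))); lia].
Qed.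

(* If all N lines are used, at least N axial segments are separated by at
   least N - 1 other ones. *)
Theorem all_lines_used_bound : (forall c, 1 <= c <= N -> used_by k c) -> 2 * N - 1 <= k.
Proof.
  intros hall.
  assert (full : n_used k = N).
  { unfold n_used. rewrite forallb_filter_id; [apply length_seq|].
    apply forallb_forall. intros c hc. apply in_seq in hc. apply holds_true, hall. lia. }
  pose proof used_le_axial as A. pose proof (n_used_prefix k) as B.
  pose proof (filter_length (fun i => holds (axial i)) (seq 1 k)) as C. rewrite length_seq in C.
  unfold n_axial, n_other in *.
  destruct k; [|destruct (holds _)]; lia.
Qed.

End LineRuns.

Section LowerBound.
Variables (n m k : nat) (p : nat -> point).
Hypothesis path : polypath k p.
Hypothesis cover : covers k p (grid n m).

Definition seg (i : nat) (x : point) : Prop := on_seg (p (i - 1)) (p i) x.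
Definition vertical (i : nat) : Prop := fst (p (i - 1)) = fst (p i).
Definition horizontal (i : nat) : Prop := snd (p (i - 1)) = snd (p i).

Definition on_column (i c : nat) : Prop := vertical i /\ fst (p i) = INR c.
Definition on_row (i c : nat) : Prop := horizontal i /\ snd (p i) = INR c.

Lemma column_runs : forall i c, vertical i -> on_column (S i) c -> on_column i c.
Proof.
  unfold on_column, vertical; intros i c hv [hv' e].
  replace (S i - 1) with i in hv' by lia. split; [auto | congruence].
Qed.

Lemma row_runs : forall i c, horizontal i -> on_row (S i) c -> on_row i c.
Proof.
  unfold on_row, horizontal; intros i c hv [hv' e].
  replace (S i - 1) with i in hv' by lia. split; [auto | congruence].
Qed.

Lemma column_fun : forall i c c', on_column i c -> on_column i c' -> c = c'.
Proof. intros i c c' [_ e] [_ e']. apply INR_eq. congruence. Qed.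

Lemma row_fun : forall i c c', on_row i c -> on_row i c' -> c = c'.
Proof. intros i c c' [_ e] [_ e']. apply INR_eq. congruence. Qed.

Definition free_cols : list nat :=
  filter (fun c => negb (holds (used_by on_column k c))) (seq 1 n).
Definition free_rows : list nat :=
  filter (fun c => negb (holds (used_by on_row k c))) (seq 1 m).
Definition diagonals : list nat :=
  filter (fun i => negb (holds (vertical i)) && negb (holds (horizontal i)))%bool (seq 1 k).

Lemma free_cols_spec c : In c free_cols <-> 1 <= c <= n /\ ~ used_by on_column k c.
Proof.
  unfold free_cols. rewrite filter_In, in_seq, Bool.negb_true_iff, holds_false.
  split; intros [h1 h2]; split; auto; lia.
Qed.

Lemma free_rows_spec c : In c free_rows <-> 1 <= c <= m /\ ~ used_by on_row k c.
Proof.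
  unfold free_rows. rewrite filter_In, in_seq, Bool.negb_true_iff, holds_false.
  split; intros [h1 h2]; split; auto; lia.
Qed.

Lemma diagonals_spec i : In i diagonals -> 1 <= i <= k /\ ~ aligned (p (i - 1)) (p i).
Proof.
  unfold diagonals. rewrite filter_In, in_seq, Bool.andb_true_iff, !Bool.negb_true_iff,
    !holds_false. intros [h1 [h2 h3]]. split; [lia|]. intros [e|e]; auto.
Qed.

(* Every segment is vertical, horizontal or diagonal, and not both of the
   first two since it has positive length. *)
Lemma segment_count :
  n_axial vertical k + n_axial horizontal k + length diagonals = k.
Proof.
  destruct path as [_ nondeg].
  pose proof (filter_length (fun i => holds (vertical i)) (seq 1 k)) as A.
  pose proof (filter_length (fun i => holds (horizontal i))
                (filter (fun i => negb (holds (vertical i))) (seq 1 k))) as B.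
  rewrite length_seq in A. rewrite !filter_filter in B.
  rewrite (filter_ext_in (fun i => negb (holds (vertical i)) && holds (horizontal i))%bool
             (fun i => holds (horizontal i))) in B.
  - unfold n_axial, diagonals. lia.
  - intros i hi. apply in_seq in hi.
    destruct (holds (horizontal i)) eqn:h2, (holds (vertical i)) eqn:h1; auto.
    rewrite holds_true in h1, h2. exfalso; apply (nondeg i); [lia|].
    apply point_eq; auto.
Qed.

Lemma used_free_cols : n_used n on_column k + length free_cols = n.
Proof.
  unfold n_used, free_cols.
  pose proof (filter_length (fun c => holds (used_by on_column k c)) (seq 1 n)) as h.
  rewrite length_seq in h. exact h.
Qed.

Lemma used_free_rows : n_used m on_row k + length free_rows = m.
Proof.
  unfold n_used, free_rows.
  pose proof (filter_length (fun c => holds (used_by on_row k c)) (seq 1 m)) as h.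
  rewrite length_seq in h. exact h.
Qed.

Lemma used_diagonals_bound :
  n_used n on_column k + n_used m on_row k + length diagonals <= k.
Proof.
  pose proof segment_count.
  pose proof (used_le_axial k n vertical on_column (fun i c h => proj1 h) column_fun).
  pose proof (used_le_axial k m horizontal on_row (fun i c h => proj1 h) row_fun).
  lia.
Qed.

Lemma no_free_col_bound : free_cols = [] -> 2 * n - 1 <= k.
Proof.
  intros e. apply (all_lines_used_bound k n vertical on_column (fun i c h => proj1 h)
                     column_fun column_runs).
  intros c hc. apply NNPP; intro nu.
  assert (hin : In c free_cols) by (apply free_cols_spec; auto). rewrite e in hin; destruct hin.
Qed.

Lemma no_free_row_bound : free_rows = [] -> 2 * m - 1 <= k.
Proof.
  intros e. apply (all_lines_used_bound k m horizontal on_row (fun i c h => proj1 h)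
                     row_fun row_runs).
  intros c hc. apply NNPP; intro nu.
  assert (hin : In c free_rows) by (apply free_rows_spec; auto). rewrite e in hin; destruct hin.
Qed.

Lemma free_point_on_diagonal a b : In a free_cols -> In b free_rows ->
  exists i, In i diagonals /\ seg i (INR a, INR b).
Proof.
  intros ha hb. apply free_cols_spec in ha. apply free_rows_spec in hb.
  destruct (cover (INR a, INR b)) as [i [hi hs]]; [exists a, b; repeat split; lia|].
  exists i. split; auto. unfold diagonals. apply filter_In. split; [apply in_seq; lia|].
  apply Bool.andb_true_iff; split; apply Bool.negb_true_iff, holds_false; intro hc.
  - apply (proj2 ha). exists i. split; [lia|]. split; auto.
    symmetry; apply (vertical_seg_x _ _ _ hc hs).
  - apply (proj2 hb). exists i. split; [lia|]. split; auto.
    symmetry; apply (horizontal_seg_y _ _ _ hc hs).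
Qed.

Definition diag_at (a b : nat) : nat :=
  epsilon (inhabits 0) (fun i => In i diagonals /\ seg i (INR a, INR b)).

Lemma diag_at_spec a b : In a free_cols -> In b free_rows ->
  In (diag_at a b) diagonals /\ seg (diag_at a b) (INR a, INR b).
Proof. intros; unfold diag_at; apply epsilon_spec, free_point_on_diagonal; auto. Qed.

Definition fcol (r : nat) : nat := nth r free_cols 0.
Definition frow (r : nat) : nat := nth r free_rows 0.

Lemma fcol_incr r r' : r < r' -> r' < length free_cols -> fcol r < fcol r'.
Proof. intros; apply sorted_nth_lt; auto. apply filter_seq_sorted. Qed.
Lemma frow_incr r r' : r < r' -> r' < length free_rows -> frow r < frow r'.
Proof. intros; apply sorted_nth_lt; auto. apply filter_seq_sorted. Qed.
Lemma fcol_in r : r < length free_cols -> In (fcol r) free_cols.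
Proof. intros; apply nth_In; auto. Qed.
Lemma frow_in r : r < length free_rows -> In (frow r) free_rows.
Proof. intros; apply nth_In; auto. Qed.

(* With a free column, each free row needs its own diagonal: a diagonal
   meets the free column at most once.  Symmetrically for a free row. *)
Lemma free_col_bound : 1 <= length free_cols -> length free_rows <= length diagonals.
Proof.
  intros h. rewrite <- (length_seq (length free_rows) 0).
  apply (inj_length_le (fun r => diag_at (fcol 0) (frow r))); [apply seq_NoDup | |].
  - intros x y hx hy e. apply in_seq in hx, hy.
    destruct (diag_at_spec (fcol 0) (frow x) (fcol_in 0 ltac:(lia)) (frow_in x ltac:(lia)))
      as [d1 s1].
    destruct (diag_at_spec (fcol 0) (frow y) (fcol_in 0 ltac:(lia)) (frow_in y ltac:(lia)))
      as [_ s2].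
    simpl in e; rewrite e in d1, s1. destruct (diagonals_spec _ d1) as [_ nd].
    assert (E := seg_unique_x _ _ _ _ (fun e => nd (or_introl e)) s1 s2 eq_refl).
    injection E; intro E'. apply INR_eq in E'.
    destruct (Nat.lt_total x y) as [c|[c|c]]; auto;
      [pose proof (frow_incr x y c ltac:(lia)) | pose proof (frow_incr y x c ltac:(lia))]; lia.
  - intros x hx. apply in_seq in hx. apply diag_at_spec; [apply fcol_in | apply frow_in]; lia.
Qed.

Lemma free_row_bound : 1 <= length free_rows -> length free_cols <= length diagonals.
Proof.
  intros h. rewrite <- (length_seq (length free_cols) 0).
  apply (inj_length_le (fun r => diag_at (fcol r) (frow 0))); [apply seq_NoDup | |].
  - intros x y hx hy e. apply in_seq in hx, hy.
    destruct (diag_at_spec (fcol x) (frow 0) (fcol_in x ltac:(lia)) (frow_in 0 ltac:(lia)))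
      as [d1 s1].
    destruct (diag_at_spec (fcol y) (frow 0) (fcol_in y ltac:(lia)) (frow_in 0 ltac:(lia)))
      as [_ s2].
    simpl in e; rewrite e in d1, s1. destruct (diagonals_spec _ d1) as [_ nd].
    assert (E := seg_unique_y _ _ _ _ (fun e => nd (or_intror e)) s1 s2 eq_refl).
    injection E; intro E'. apply INR_eq in E'.
    destruct (Nat.lt_total x y) as [c|[c|c]]; auto;
      [pose proof (fcol_incr x y c ltac:(lia)) | pose proof (fcol_incr y x c ltac:(lia))]; lia.
  - intros x hx. apply in_seq in hx. apply diag_at_spec; [apply fcol_in | apply frow_in]; lia.
Qed.

Section TwoFreeLines.
(* With at least two free columns and two free rows, the free lines span a
   subgrid whose border points all need diagonals, at most two per diagonal. *)
Hypothesis two_cols : 2 <= length free_cols.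
Hypothesis two_rows : 2 <= length free_rows.

Definition inner_cols : nat := length free_cols - 2.
Definition inner_rows : nat := length free_rows - 2.

Lemma fcol_incr' r r' : r < r' -> r' < inner_cols + 2 -> fcol r < fcol r'.
Proof. intros; apply fcol_incr; unfold inner_cols in *; lia. Qed.
Lemma frow_incr' r r' : r < r' -> r' < inner_rows + 2 -> frow r < frow r'.
Proof. intros; apply frow_incr; unfold inner_rows in *; lia. Qed.

Local Notation wlen := (walk_len inner_cols inner_rows).
Local Notation wpt := (walk inner_cols inner_rows fcol frow).
Local Notation in_wrect := (in_rect (coord fcol 0) (coord fcol (inner_cols + 1))
                                    (coord frow 0) (coord frow (inner_rows + 1))).

Lemma wpt_in_rect s : s < wlen -> in_wrect (wpt s).
Proof. apply walk_in_rect; [apply fcol_incr' | apply frow_incr']. Qed.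

Lemma wpt_inj s t : s < wlen -> t < wlen -> wpt s = wpt t -> s = t.
Proof. apply walk_inj; [apply fcol_incr' | apply frow_incr']. Qed.

Definition wdiag (s : nat) : nat :=
  diag_at (fcol (walk_col inner_cols inner_rows s)) (frow (walk_row inner_cols inner_rows s)).

Lemma wdiag_spec s : s < wlen -> In (wdiag s) diagonals /\ seg (wdiag s) (wpt s).
Proof.
  intros h. destruct (walk_index_bound inner_cols inner_rows s h).
  apply diag_at_spec; [apply fcol_in | apply frow_in]; unfold inner_cols, inner_rows in *; lia.
Qed.

Lemma wpt_three d s1 s2 s3 : In d diagonals -> s1 < wlen -> s2 < wlen -> s3 < wlen ->
  s1 <> s2 -> s1 <> s3 -> s2 <> s3 ->
  seg d (wpt s1) -> seg d (wpt s2) -> seg d (wpt s3) -> False.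
Proof.
  intros hd h1 h2 h3 n12 n13 n23 g1 g2 g3.
  destruct (diagonals_spec d hd) as [_ nd].
  destruct (diagonal_three_border (coord fcol 0) (coord fcol (inner_cols + 1))
             (coord frow 0) (coord frow (inner_rows + 1)) _ _ _ _ _ nd g1 g2 g3) as [E|[E|E]];
    auto using wpt_in_rect, walk_on_border; apply wpt_inj in E; auto.
Qed.

Lemma wdiag_fiber d : length (fiber wdiag d (seq 0 wlen)) <= 2.
Proof.
  unfold fiber.
  destruct (filter (fun s => wdiag s =? d) (seq 0 wlen)) as [|s1 [|s2 [|s3 r]]] eqn:E;
    simpl; try lia; exfalso.
  assert (ND : NoDup (s1 :: s2 :: s3 :: r)) by (rewrite <- E; apply NoDup_filter, seq_NoDup).
  assert (hin : forall x, In x (s1 :: s2 :: s3 :: r) -> x < wlen /\ wdiag x = d).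
  { intros x hx. rewrite <- E in hx. apply filter_In in hx. destruct hx as [h1 h2].
    apply in_seq in h1. apply Nat.eqb_eq in h2. split; [lia | auto]. }
  destruct (hin s1 ltac:(simpl; auto)) as [a1 <-].
  destruct (hin s2 ltac:(simpl; auto)) as [a2 b2].
  destruct (hin s3 ltac:(simpl; auto)) as [a3 b3].
  inversion ND as [|? ? N1 ND1]; subst. inversion ND1 as [|? ? N2 _]; subst.
  destruct (wdiag_spec s1 a1) as [hd g1]. destruct (wdiag_spec s2 a2) as [_ g2].
  destruct (wdiag_spec s3 a3) as [_ g3]. rewrite b2 in g2. rewrite b3 in g3.
  apply (wpt_three (wdiag s1) s1 s2 s3); auto; intro; subst; simpl in *; tauto.
Qed.

Lemma border_bound : wlen <= 2 * length diagonals.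
Proof.
  rewrite <- (length_seq wlen 0). apply (fiber_bound wdiag).
  - apply NoDup_filter, seq_NoDup.
  - intros s hs. apply in_seq in hs. apply wdiag_spec; lia.
  - apply wdiag_fiber.
Qed.

Section Tight.
(* If the bound is attained, every diagonal covers exactly two border
   points; for a noncrossing path (or a path of two segments) this gives a
   matching of the border by disjoint chords, which cannot exist. *)
Hypothesis tight : wlen = 2 * length diagonals.
Hypothesis simple : noncrossing k p \/ k = 2.

Definition partner (s : nat) : nat :=
  match fiber wdiag (wdiag s) (seq 0 wlen) with
  | a :: b :: _ => if a =? s then b else a
  | _ => s
  end.

Lemma partner_spec s : s < wlen ->
  partner s < wlen /\ partner s <> s /\ wdiag (partner s) = wdiag s /\
  forall t, t < wlen -> wdiag t = wdiag s -> t = s \/ t = partner s.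
Proof.
  intros h.
  assert (L : length (fiber wdiag (wdiag s) (seq 0 wlen)) = 2).
  { apply (fiber_full wdiag diagonals); [apply NoDup_filter, seq_NoDup | | apply wdiag_fiber | |].
    - intros x hx. apply in_seq in hx. apply wdiag_spec; lia.
    - rewrite length_seq; auto.
    - apply wdiag_spec; auto. }
  assert (ND : NoDup (fiber wdiag (wdiag s) (seq 0 wlen))) by apply NoDup_filter, seq_NoDup.
  assert (hin : forall x, In x (fiber wdiag (wdiag s) (seq 0 wlen)) <-> x < wlen /\ wdiag x = wdiag s).
  { intros x. unfold fiber. rewrite filter_In, in_seq, Nat.eqb_eq. split; intros [a b]; split; auto; lia. }
  assert (hs : In s (fiber wdiag (wdiag s) (seq 0 wlen))) by (apply hin; auto).
  unfold partner. destruct (fiber wdiag (wdiag s) (seq 0 wlen)) as [|a [|b [|c r]]];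
    simpl in L; try lia.
  inversion ND as [|? ? N1 _]; subst.
  assert (ab : a <> b) by (intro; subst; apply N1; simpl; auto).
  destruct (proj1 (hin a) ltac:(simpl; auto)) as [a1 a2].
  destruct (proj1 (hin b) ltac:(simpl; auto)) as [b1 b2].
  assert (other : forall t, t < wlen -> wdiag t = wdiag s -> t = a \/ t = b).
  { intros t ht hf. destruct (proj2 (hin t) (conj ht hf)) as [|[|[]]]; auto. }
  destruct (Nat.eqb_spec a s) as [<-|e].
  - repeat split; auto.
  - assert (sb : s = b) by (destruct hs as [|[|[]]]; auto; contradiction). subst b.
    repeat split; auto. intros t ht hf. destruct (other t ht hf); auto.
Qed.

Lemma partner_invol s : s < wlen -> partner (partner s) = s.
Proof.
  intros h. destruct (partner_spec s h) as [a [b [c d]]].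
  destruct (partner_spec (partner s) a) as [a' [b' [c' _]]].
  destruct (d (partner (partner s)) a' ltac:(congruence)); auto. contradiction.
Qed.

Lemma partner_diag s : s < wlen -> ~ aligned (wpt s) (wpt (partner s)).
Proof.
  intros h. destruct (partner_spec s h) as [a [b [c _]]].
  destruct (wdiag_spec s h) as [hd g1]. destruct (wdiag_spec (partner s) a) as [_ g2].
  rewrite c in g2. destruct (diagonals_spec _ hd) as [_ nd].
  intros [e|e]; apply b; symmetry; apply wpt_inj; auto;
    [apply (seg_unique_x (p (wdiag s - 1)) (p (wdiag s)))
    | apply (seg_unique_y (p (wdiag s - 1)) (p (wdiag s)))]; auto;
    intro E; apply nd; [left|right]; auto.
Qed.

Lemma two_diagonals_meet s t x : k = 2 -> s < wlen -> t < wlen -> wdiag s < wdiag t ->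
  seg (wdiag s) x -> seg (wdiag t) x -> x = p (wdiag s).
Proof.
  intros k2 hs ht hlt xs xt.
  destruct (partner_spec s hs) as [ms1 [ms2 [ms3 _]]].
  destruct (wdiag_spec s hs) as [ds gs]. destruct (wdiag_spec (partner s) ms1) as [_ gms].
  destruct (wdiag_spec t ht) as [dt gt].
  destruct (diagonals_spec _ ds) as [rs nds]. destruct (diagonals_spec _ dt) as [rt _].
  rewrite ms3 in gms.
  assert (e1 : wdiag s = 1) by lia. assert (e2 : wdiag t = 2) by lia.
  rewrite e1 in xs, gs, gms, nds |- *. rewrite e2 in xt, gt.
  unfold seg in *; simpl in xs, gs, gms, xt, gt, nds.
  destruct (Req_dec (cross (p 0) (p 1) (p 2)) 0) as [C|C];
    [exfalso | apply (consecutive_meet_vertex _ _ _ _ C xs xt)].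
  assert (CC := collinear_consecutive _ _ _ _ _ _ (fun e => nds (or_introl e)) C gs gms gt).
  destruct (chord_border_points (coord fcol 0) (coord fcol (inner_cols + 1))
              (coord frow 0) (coord frow (inner_rows + 1)) (wpt s) (wpt (partner s)) (wpt t))
    as [E|E]; auto using wpt_in_rect, walk_on_border, partner_diag;
    apply wpt_inj in E; auto; subst t; rewrite ?ms3 in e2; lia.
Qed.

Lemma diagonals_meet s t x : s < wlen -> t < wlen -> wdiag s < wdiag t ->
  seg (wdiag s) x -> seg (wdiag t) x -> x = p (wdiag s).
Proof.
  intros hs ht hlt xs xt.
  destruct (wdiag_spec s hs) as [ds _]. destruct (wdiag_spec t ht) as [dt _].
  destruct (diagonals_spec _ ds) as [rs _]. destruct (diagonals_spec _ dt) as [rt _].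
  destruct simple as [nc|k2]; [|apply (two_diagonals_meet s t); auto].
  destruct (nc (wdiag s) (wdiag t) ltac:(lia) hlt ltac:(lia) x xs xt); auto.
Qed.

Lemma chords_disjoint s t x : s < wlen -> t < wlen -> wdiag s < wdiag t ->
  on_seg (wpt s) (wpt (partner s)) x -> on_seg (wpt t) (wpt (partner t)) x -> False.
Proof.
  intros hs ht hlt c1 c2.
  destruct (partner_spec s hs) as [ms1 [ms2 [ms3 _]]].
  destruct (partner_spec t ht) as [mt1 [mt2 [mt3 _]]].
  destruct (wdiag_spec s hs) as [ds gs]. destruct (wdiag_spec (partner s) ms1) as [_ gms].
  destruct (wdiag_spec t ht) as [dt gt]. destruct (wdiag_spec (partner t) mt1) as [_ gmt].
  rewrite ms3 in gms. rewrite mt3 in gmt.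
  destruct (diagonals_spec _ ds) as [rs _].
  assert (ex := diagonals_meet s t x hs ht hlt (on_seg_sub _ _ _ _ _ gs gms c1)
                  (on_seg_sub _ _ _ _ _ gt gmt c2)).
  assert (pne : p (wdiag s - 1) <> p (wdiag s)) by (destruct path as [_ hp]; apply hp; lia).
  rewrite ex in c1, c2.
  (* the vertex is one of the two border points on the first chord, and then
     a third border point on the second diagonal *)
  destruct (endpoint_of_subseg _ _ _ _ pne gs gms c1) as [E|E];
    [apply (wpt_three (wdiag t) s t (partner t)) | apply (wpt_three (wdiag t) (partner s) t (partner t))];
    auto; try (intro E'; subst; lia); try (intro E'; rewrite E' in *; lia);
    unfold seg; rewrite <- E; apply (on_seg_sub _ _ _ _ _ gt gmt c2).
Qed.

Lemma tight_impossible : False.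
Proof.
  apply (no_disjoint_chord_matching inner_cols inner_rows fcol frow fcol_incr' frow_incr' partner).
  - intros; apply partner_spec; auto.
  - apply partner_invol.
  - intros; apply partner_spec; auto.
  - apply partner_diag.
  - intros s t hs ht n1 n2 x c1 c2.
    destruct (partner_spec s hs) as [_ [_ [_ U]]].
    assert (wdiag s <> wdiag t) by (intro E; destruct (U t ht (eq_sym E)); auto).
    destruct (Nat.lt_total (wdiag s) (wdiag t)) as [h|[h|h]]; [| contradiction |];
      [apply (chords_disjoint s t x) | apply (chords_disjoint t s x)]; auto.
Qed.

End Tight.
End TwoFreeLines.
End LowerBound.

Theorem lower_bound n m k p : 1 <= n -> 1 <= m -> polypath k p -> covers k p (grid n m) ->
  2 * n - 1 <= k \/ 2 * m - 1 <= k \/ n + m - 1 <= k \/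
  (n + m - 2 <= k /\ (k = n + m - 2 -> noncrossing k p \/ k = 2 -> False)).
Proof.
  intros hn hm hpp hcov.
  pose proof (used_free_cols n k p) as UC. pose proof (used_free_rows m k p) as UR.
  pose proof (used_diagonals_bound n m k p hpp) as UD.
  destruct (free_cols n k p) as [|c0 [|c1 cs]] eqn:A.
  - left; apply (no_free_col_bound n k p); auto.
  - right; right; left. pose proof (free_col_bound n m k p hcov) as F.
    rewrite A in *; simpl in *. lia.
  - destruct (free_rows m k p) as [|r0 [|r1 rs]] eqn:B.
    + right; left; apply (no_free_row_bound m k p); auto.
    + right; right; left. pose proof (free_row_bound n m k p hcov) as F.
      rewrite A, B in *; simpl in *. lia.
    + right; right; right.
      assert (two : forall l (x y : nat) r, l = x :: y :: r -> 2 <= length l)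
        by (intros; subst; simpl; lia).
      pose proof (border_bound n m k p hcov (two _ _ _ _ A) (two _ _ _ _ B)) as W.
      unfold walk_len, inner_cols, inner_rows in W |- *. rewrite A, B in *; simpl in *.
      split; [lia|]. intros hk hs.
      apply (tight_impossible n m k p hpp hcov (two _ _ _ _ A) (two _ _ _ _ B)); auto.
      unfold walk_len, inner_cols, inner_rows. rewrite A, B; simpl. lia.
Qed.

Section Zigzag.
(* The boustrophedon path through N columns of height M: up column 1, over,
   down column 2, over, ...; it has 2N - 1 segments and is noncrossing. *)
Variable M : nat.
Hypothesis hM : 1 <= M.

Definition zig_y (c : nat) : R := if Nat.even c then 1%R else (INR M + 1)%R.
Definition zigzag (i : nat) : point := (INR (i / 2 + 1), zig_y ((i + 1) / 2)).

Lemma zigzag_even c : zigzag (2 * c) = (INR (c + 1), zig_y c).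
Proof.
  unfold zigzag. rewrite Nat.mul_comm, Nat.div_mul by lia.
  replace ((c * 2 + 1) / 2) with c; [reflexivity|].
  apply (Nat.div_unique _ 2 c 1); lia.
Qed.

Lemma zigzag_odd c : zigzag (2 * c + 1) = (INR (c + 1), zig_y (c + 1)).
Proof.
  unfold zigzag. replace ((2 * c + 1) / 2) with c by (apply (Nat.div_unique _ 2 c 1); lia).
  replace ((2 * c + 1 + 1) / 2) with (c + 1); [reflexivity|].
  replace (2 * c + 1 + 1) with ((c + 1) * 2) by lia. rewrite Nat.div_mul; lia.
Qed.

Lemma zig_y_next c : zig_y c <> zig_y (c + 1).
Proof.
  unfold zig_y. rewrite Nat.add_1_r, Nat.even_succ, <- Nat.negb_even.
  assert (0 < INR M)%R by (apply lt_0_INR; lia).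
  destruct (Nat.even c); simpl; lra.
Qed.

Lemma zig_y_values c : zig_y c = 1%R \/ zig_y c = (INR M + 1)%R.
Proof. unfold zig_y; destruct (Nat.even c); auto. Qed.

Lemma pos_parity i : 1 <= i -> exists c, i = 2 * c + 1 \/ i = 2 * c + 2.
Proof.
  intros h. destruct (Nat.Even_or_Odd i) as [[c e]|[c e]].
  - exists (c - 1). right. lia.
  - exists c. left. lia.
Qed.

Lemma zigzag_column c x : on_seg (zigzag (2 * c)) (zigzag (2 * c + 1)) x -> fst x = INR (c + 1).
Proof. rewrite zigzag_even, zigzag_odd. intros [t [ht ->]]. simpl. ring. Qed.

Lemma zigzag_step c x : on_seg (zigzag (2 * c + 1)) (zigzag (2 * c + 2)) x ->
  snd x = zig_y (c + 1) /\ (INR (c + 1) <= fst x <= INR (c + 2))%R.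
Proof.
  replace (2 * c + 2) with (2 * (c + 1)) by lia. rewrite zigzag_even, zigzag_odd.
  intros [t [ht ->]]. simpl. replace (c + 1 + 1) with (c + 2) by lia.
  rewrite !plus_INR. simpl. split; [ring|]. split; nra.
Qed.

Lemma zigzag_path N : 1 <= N -> polypath (2 * N - 1) zigzag.
Proof.
  intros hN. split; [lia|]. intros i hi.
  destruct (pos_parity i ltac:(lia)) as [c [e|e]]; subst.
  - replace (2 * c + 1 - 1) with (2 * c) by lia. rewrite zigzag_even, zigzag_odd.
    intro E. apply (f_equal snd) in E. apply (zig_y_next c); auto.
  - replace (2 * c + 2 - 1) with (2 * c + 1) by lia. replace (2 * c + 2) with (2 * (c + 1)) by lia.
    rewrite zigzag_even, zigzag_odd. intro E. apply (f_equal fst) in E. apply INR_eq in E. lia.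
Qed.

(* Column a of the grid lies on segment 2a - 1. *)
Lemma zigzag_covers N : covers (2 * N - 1) zigzag (grid N M).
Proof.
  intros x [a [b [ha [hb ->]]]].
  exists (2 * (a - 1) + 1). split; [lia|].
  replace (2 * (a - 1) + 1 - 1) with (2 * (a - 1)) by lia.
  rewrite zigzag_even, zigzag_odd. replace (a - 1 + 1) with a by lia.
  assert (0 < INR M)%R by (apply lt_0_INR; lia).
  assert (hb1 : (1 <= INR b <= INR M)%R) by (split; [apply (le_INR 1) | apply le_INR]; lia).
  assert (nx := zig_y_next (a - 1)). replace (a - 1 + 1) with a in nx by lia.
  destruct (zig_y_values (a - 1)) as [e1|e1]; destruct (zig_y_values a) as [e2|e2];
    rewrite e1, e2 in *; try (exfalso; apply nx; reflexivity).
  - exists ((INR b - 1) / INR M)%R. split; [split|].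
    + apply Rmult_le_pos; [lra | left; apply Rinv_0_lt_compat; lra].
    + apply (Rmult_le_reg_r (INR M)); auto. field_simplify; lra.
    + simpl. f_equal; field; lra.
  - exists ((INR M + 1 - INR b) / INR M)%R. split; [split|].
    + apply Rmult_le_pos; [lra | left; apply Rinv_0_lt_compat; lra].
    + apply (Rmult_le_reg_r (INR M)); auto. field_simplify; lra.
    + simpl. f_equal; field; lra.
Qed.

(* Segments meet only when consecutive: columns are disjoint, steps are at
   alternating heights, and a step meets only the columns at its ends. *)
Lemma zigzag_noncrossing N : noncrossing (2 * N - 1) zigzag.
Proof.
  intros i j hi hij hj x h1 h2.
  destruct (pos_parity i hi) as [c [ei|ei]]; destruct (pos_parity j ltac:(lia)) as [d [ej|ej]];
    subst.
  - replace (2 * c + 1 - 1) with (2 * c) in h1 by lia.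
    replace (2 * d + 1 - 1) with (2 * d) in h2 by lia.
    apply zigzag_column in h1, h2. rewrite h1 in h2. apply INR_eq in h2. lia.
  - replace (2 * c + 1 - 1) with (2 * c) in h1 by lia.
    replace (2 * d + 2 - 1) with (2 * d + 1) in h2 by lia.
    apply zigzag_column in h1. apply zigzag_step in h2. destruct h2 as [y2 [x1 x2]].
    rewrite h1 in x1, x2. apply INR_le in x1. apply INR_le in x2.
    assert (c = d) by lia. subst.
    split; [lia|]. rewrite zigzag_odd. apply point_eq; simpl; auto.
  - replace (2 * c + 2 - 1) with (2 * c + 1) in h1 by lia.
    replace (2 * d + 1 - 1) with (2 * d) in h2 by lia.
    apply zigzag_step in h1. apply zigzag_column in h2. destruct h1 as [y1 [x1 x2]].
    rewrite h2 in x1, x2. apply INR_le in x1. apply INR_le in x2. assert (d = c + 1) by lia. subst.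
    split; [lia|]. replace (2 * c + 2) with (2 * (c + 1)) by lia. rewrite zigzag_even.
    apply point_eq; simpl; auto; rewrite h2; f_equal; lia.
  - replace (2 * c + 2 - 1) with (2 * c + 1) in h1 by lia.
    replace (2 * d + 2 - 1) with (2 * d + 1) in h2 by lia.
    apply zigzag_step in h1, h2. destruct h1 as [y1 [x1 x2]], h2 as [y2 [x3 x4]].
    assert (hd : d = c + 1).
    { assert (INR (d + 1) <= INR (c + 2))%R by lra. apply INR_le in H. lia. }
    subst. exfalso. apply (zig_y_next (c + 1)). congruence.
Qed.

End Zigzag.

Definition swap (x : point) : point := (snd x, fst x).

Lemma swap_swap x : swap (swap x) = x.
Proof. destruct x; reflexivity. Qed.

Lemma swap_seg a b x : on_seg a b x -> on_seg (swap a) (swap b) (swap x).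
Proof. intros [t [ht ->]]. exists t; split; auto. Qed.

Lemma swap_path k p : polypath k p -> polypath k (fun i => swap (p i)).
Proof.
  intros [h1 h2]. split; auto. intros i hi E. apply (h2 i hi).
  rewrite <- (swap_swap (p (i - 1))), <- (swap_swap (p i)), E. reflexivity.
Qed.

Lemma swap_covers k p n m : covers k p (grid m n) -> covers k (fun i => swap (p i)) (grid n m).
Proof.
  intros h x [a [b [ha [hb ->]]]].
  destruct (h (INR b, INR a)) as [i [hi hs]]; [exists b, a; auto|].
  exists i; split; auto. apply (swap_seg _ _ _ hs).
Qed.

Lemma swap_noncrossing k p : noncrossing k p -> noncrossing k (fun i => swap (p i)).
Proof.
  intros h i j h1 h2 h3 x s1 s2.
  cbv beta in s1, s2. apply swap_seg in s1, s2. rewrite !swap_swap in s1, s2.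
  destruct (h i j h1 h2 h3 _ s1 s2) as [e1 e2]. split; auto.
  cbv beta. rewrite <- e2, swap_swap. reflexivity.
Qed.

Lemma zigzag_cover n m : 1 <= n -> 1 <= m -> exists p, polypath (2 * Nat.min n m - 1) p /\
  noncrossing (2 * Nat.min n m - 1) p /\ covers (2 * Nat.min n m - 1) p (grid n m).
Proof.
  intros hn hm. destruct (Nat.le_gt_cases n m).
  - rewrite Nat.min_l by lia. exists (zigzag m).
    split; [apply zigzag_path; auto | split; [apply zigzag_noncrossing | apply zigzag_covers]]; auto.
  - rewrite Nat.min_r by lia. exists (fun i => swap (zigzag n i)).
    split; [apply swap_path, zigzag_path; auto | split;
      [apply swap_noncrossing, zigzag_noncrossing | apply swap_covers, zigzag_covers]]; auto.
Qed.

(* The half-turn x |-> (n+1, n+2) - x; it maps V(n+1,n+1) onto the grid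
   {0..n} x {1..n+1}, i.e. V(n,n) plus a new left column and top row. *)
Definition half_turn (n : nat) (x : point) : point := (INR n + 1 - fst x, INR n + 2 - snd x)%R.

Lemma half_turn_invol n x : half_turn n (half_turn n x) = x.
Proof. destruct x; unfold half_turn; simpl; f_equal; ring. Qed.

Lemma half_turn_seg n a b x : on_seg a b x -> on_seg (half_turn n a) (half_turn n b) (half_turn n x).
Proof. intros [t [ht ->]]. exists t; split; auto. unfold half_turn; simpl; f_equal; ring. Qed.

(* A spiral cover of V(n,n): 2n - 2 segments, the last one running along the
   bottom row from (c,1), c >= n, into the corner (1,1). *)
Definition spiral (n : nat) (p : nat -> point) (c : R) : Prop :=
  polypath (2 * n - 2) p /\ covers (2 * n - 2) p (grid n n) /\
  p (2 * n - 3) = (c, 1%R) /\ (INR n <= c)%R /\ p (2 * n - 2) = (1%R, 1%R).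

Definition spiral3 (i : nat) : point :=
  match i with 0 => (3, 3)%R | 1 => (1, 1)%R | 2 => (1, 4)%R | 3 => (4, 1)%R | _ => (1, 1)%R end.

Lemma spiral_3 : spiral 3 spiral3 4.
Proof.
  split; [|split; [|split; [|split]]]; try reflexivity.
  - split; [lia|]. intros i hi. destruct i as [|[|[|[|[|i]]]]]; try lia; simpl;
      intro E; injection E; intros; lra.
  - intros x [a [b [ha [hb ->]]]].
    assert (Ha : a = 1 \/ a = 2 \/ a = 3) by lia. assert (Hb : b = 1 \/ b = 2 \/ b = 3) by lia.
    destruct Ha as [-> | [-> | ->]]; destruct Hb as [-> | [-> | ->]]; simpl.
    + exists 2; split; [lia|]. exists 0%R; split; [lra|]. simpl; f_equal; ring.
    + exists 2; split; [lia|]. exists (1/3)%R; split; [lra|]. simpl; f_equal; field.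
    + exists 2; split; [lia|]. exists (2/3)%R; split; [lra|]. simpl; f_equal; field.
    + exists 4; split; [lia|]. exists (2/3)%R; split; [lra|]. simpl; f_equal; field.
    + exists 1; split; [lia|]. exists (1/2)%R; split; [lra|]. simpl; f_equal; field.
    + exists 3; split; [lia|]. exists (1/3)%R; split; [lra|]. simpl; f_equal; field.
    + exists 4; split; [lia|]. exists (1/3)%R; split; [lra|]. simpl; f_equal; field.
    + exists 3; split; [lia|]. exists (2/3)%R; split; [lra|]. simpl; f_equal; field.
    + exists 1; split; [lia|]. exists 0%R; split; [lra|]. simpl; f_equal; ring.
  - simpl; lra.
Qed.

Section SpiralStep.
(* From a spiral of V(n,n): prolong its last segment to (0,1), go up to
   (0,n+1) and right to (n,n+1); the half-turn of this path is a spiral of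
   V(n+1,n+1) with two more segments. *)
Variables (n : nat) (p : nat -> point) (c : R).
Hypothesis n3 : 3 <= n.
Hypothesis sp : spiral n p c.

Definition spiral_extend (i : nat) : point :=
  if i <? 2 * n - 2 then p i
  else if i =? 2 * n - 2 then (0, 1)%R
  else if i =? 2 * n - 1 then (0, INR n + 1)%R
  else (INR n, INR n + 1)%R.

Lemma extend_old i : i < 2 * n - 2 -> spiral_extend i = p i.
Proof. intros h; unfold spiral_extend; destruct (Nat.ltb_spec i (2 * n - 2)); auto; lia. Qed.

Lemma extend_new :
  spiral_extend (2 * n - 2) = (0, 1)%R /\ spiral_extend (2 * n - 1) = (0, INR n + 1)%R /\
  spiral_extend (2 * n) = (INR n, INR n + 1)%R.
Proof.
  unfold spiral_extend.
  destruct (Nat.ltb_spec (2 * n - 2) (2 * n - 2)); [lia|]. rewrite Nat.eqb_refl.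
  destruct (Nat.ltb_spec (2 * n - 1) (2 * n - 2)); [lia|].
  destruct (Nat.eqb_spec (2 * n - 1) (2 * n - 2)); [lia|]. rewrite Nat.eqb_refl.
  destruct (Nat.ltb_spec (2 * n) (2 * n - 2)); [lia|].
  destruct (Nat.eqb_spec (2 * n) (2 * n - 2)); [lia|].
  destruct (Nat.eqb_spec (2 * n) (2 * n - 1)); [lia|]. auto.
Qed.

Lemma INR_n_ge_3 : (3 <= INR n)%R.
Proof. replace 3%R with (INR 3) by (simpl; ring). apply le_INR; lia. Qed.

Lemma extend_path : polypath (2 * n) spiral_extend.
Proof.
  destruct sp as [[_ nondeg] [_ [e1 [ec e2]]]]. destruct extend_new as [q0 [q1 q2]].
  pose proof INR_n_ge_3.
  split; [lia|]. intros i hi E.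
  destruct (Nat.lt_ge_cases i (2 * n - 2)).
  - rewrite !extend_old in E by lia. apply (nondeg i); auto; lia.
  - assert (Hi : i = 2 * n - 2 \/ i = 2 * n - 1 \/ i = 2 * n) by lia.
    destruct Hi as [-> | [-> | ->]].
    + rewrite extend_old, q0 in E by lia.
      replace (2 * n - 2 - 1) with (2 * n - 3) in E by lia. rewrite e1 in E.
      injection E; intros; lra.
    + replace (2 * n - 1 - 1) with (2 * n - 2) in E by lia. rewrite q0, q1 in E.
      injection E; intros; lra.
    + replace (2 * n - 1) with (2 * n - 1) in E by lia. rewrite q1, q2 in E.
      injection E; intros; lra.
Qed.

(* Points of V(n,n) other than the corner region stay covered by the
   extended path: its last old segment [(c,1),(1,1)] now runs to (0,1). *)
Lemma extend_covers_old a b : 1 <= a <= n -> 2 <= b <= S n ->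
  exists i, 1 <= i <= 2 * n /\
    on_seg (spiral_extend (i - 1)) (spiral_extend i) (half_turn n (INR a, INR b)).
Proof.
  intros ha hb. destruct sp as [_ [cov [e1 [ec e2]]]]. destruct extend_new as [q0 _].
  pose proof INR_n_ge_3.
  destruct (cov (INR (n + 1 - a), INR (n + 2 - b))) as [i [hi hs]];
    [exists (n + 1 - a), (n + 2 - b); repeat split; lia|].
  replace (INR (n + 1 - a), INR (n + 2 - b)) with (half_turn n (INR a, INR b)) in hs
    by (unfold half_turn; rewrite !minus_INR, !plus_INR by lia; simpl; f_equal; ring).
  destruct (Nat.lt_ge_cases i (2 * n - 2)).
  - exists i. split; [lia|]. rewrite !extend_old by lia. auto.
  - assert (i = 2 * n - 2) by lia. subst i.
    exists (2 * n - 2). split; [lia|]. rewrite q0, extend_old by lia.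
    replace (2 * n - 2 - 1) with (2 * n - 3) in hs |- * by lia.
    rewrite e1 in hs |- *. rewrite e2 in hs.
    destruct hs as [t [ht E]]. unfold half_turn in E |- *; simpl in E |- *.
    injection E; intros Ey Ex.
    exists (t * (c - 1) / c)%R. split.
    + split; [apply Rmult_le_pos; [nra | left; apply Rinv_0_lt_compat; lra]|].
      apply (Rmult_le_reg_r c); [lra|]. field_simplify; nra.
    + simpl; f_equal; [|lra]. rewrite Ex. field. lra.
Qed.

(* Every point of V(n+1,n+1) is mapped by the half-turn onto the extended
   path: onto the new column x = 0 or row y = n+1, or onto the old path. *)
Lemma extend_covers a b : 1 <= a <= S n -> 1 <= b <= S n ->
  exists i, 1 <= i <= 2 * n /\
    on_seg (spiral_extend (i - 1)) (spiral_extend i) (half_turn n (INR a, INR b)).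
Proof.
  intros ha hb. destruct extend_new as [q0 [q1 q2]].
  pose proof INR_n_ge_3.
  destruct (Nat.eq_dec a (S n)) as [-> | na].
  { exists (2 * n - 1). split; [lia|]. replace (2 * n - 1 - 1) with (2 * n - 2) by lia.
    rewrite q0, q1. unfold half_turn; cbn [fst snd]. rewrite S_INR.
    assert (ib : (1 <= INR b <= INR n + 1)%R)
      by (rewrite <- S_INR; split; [apply (le_INR 1) | apply le_INR]; lia).
    exists ((INR n + 1 - INR b) / INR n)%R. split.
    - split; [apply Rmult_le_pos; [lra | left; apply Rinv_0_lt_compat; lra]|].
      apply (Rmult_le_reg_r (INR n)); [lra|]. field_simplify; lra.
    - simpl; f_equal; field; lra. }
  destruct (Nat.eq_dec b 1) as [-> | nb]; [|apply extend_covers_old; lia].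
  exists (2 * n). split; [lia|]. rewrite q1, q2. unfold half_turn; simpl.
  assert (ia : (1 <= INR a <= INR n)%R) by (split; [apply (le_INR 1) | apply le_INR]; lia).
  exists ((INR n + 1 - INR a) / INR n)%R. split.
  - split; [apply Rmult_le_pos; [lra | left; apply Rinv_0_lt_compat; lra]|].
    apply (Rmult_le_reg_r (INR n)); [lra|]. field_simplify; lra.
  - simpl; f_equal; field; lra.
Qed.

Lemma spiral_step : spiral (S n) (fun i => half_turn n (spiral_extend i)) (INR (S n)).
Proof.
  destruct extend_new as [q0 [q1 q2]]. unfold spiral.
  replace (2 * S n - 2) with (2 * n) by lia. replace (2 * S n - 3) with (2 * n - 1) by lia.
  split; [|split; [|split; [|split]]].
  - destruct extend_path as [hk nondeg]. split; auto. intros i hi E. apply (nondeg i hi).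
    rewrite <- (half_turn_invol n (spiral_extend (i - 1))), E, half_turn_invol; reflexivity.
  - intros x [a [b [ha [hb ->]]]].
    destruct (extend_covers a b ha hb) as [i [hi hs]]. exists i. split; auto.
    rewrite <- (half_turn_invol n (INR a, INR b)). apply half_turn_seg; auto.
  - rewrite q1. unfold half_turn; cbn [fst snd]. rewrite S_INR. f_equal; ring.
  - lra.
  - rewrite q2. unfold half_turn; simpl. f_equal; ring.
Qed.

End SpiralStep.

Lemma spiral_exists n : 3 <= n -> exists p c, spiral n p c.
Proof.
  induction n as [|n IH]; intros h; [lia|].
  destruct (Nat.eq_dec n 2) as [-> | ne]; [exists spiral3, 4%R; apply spiral_3|].
  destruct (IH ltac:(lia)) as [p [c sp]].
  exists (fun i => half_turn n (spiral_extend n p i)), (INR (S n)).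
  apply (spiral_step n p c); auto; lia.
Qed.

(* The lower bounds of the theorem follow from [lower_bound]: for n = m = 2
   the case k = n + m - 2 is excluded because k = 2. *)
Lemma cover_lower_bound n m k p : 1 <= n -> 1 <= m -> polypath k p -> covers k p (grid n m) ->
  (if (Nat.eqb n m && Nat.leb 3 n)%bool then 2 * Nat.min n m - 2 else 2 * Nat.min n m - 1) <= k.
Proof.
  intros hn hm hp hc. pose proof (proj1 hp) as k1.
  destruct (lower_bound n m k p hn hm hp hc) as [A|[A|[A|[A B]]]];
    destruct (Nat.eqb_spec n m) as [<- | ne]; destruct (Nat.leb_spec 3 n); simpl; lia.
Qed.

Lemma noncrossing_lower_bound n m k p : 1 <= n -> 1 <= m -> polypath k p -> noncrossing k p ->
  covers k p (grid n m) -> 2 * Nat.min n m - 1 <= k.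
Proof.
  intros hn hm hp hnc hc.
  destruct (lower_bound n m k p hn hm hp hc) as [A|[A|[A|[A B]]]]; try lia.
  assert (k <> n + m - 2) by (intro e; apply (B e); left; exact hnc). lia.
Qed.

Theorem theorem3 (n m : nat) (hn : (1 <= n)%nat) (hm : (1 <= m)%nat) :
  min_cover_segments (grid n m)
    (if (Nat.eqb n m && Nat.leb 3 n)%bool
     then (2 * Nat.min n m - 2)%nat
     else (2 * Nat.min n m - 1)%nat)
  /\ min_noncrossing_cover_segments (grid n m) (2 * Nat.min n m - 1)%nat.
Proof.
  destruct (zigzag_cover n m hn hm) as [z [zpath [znc zcov]]].
  split; split.
  - destruct (Nat.eqb_spec n m) as [<- | ne]; destruct (Nat.leb_spec 3 n) as [n3|]; simpl;
      try (exists z; split; assumption).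
    rewrite Nat.min_id. destruct (spiral_exists n n3) as [p [c [sp_path [sp_cov _]]]].
    exists p; split; assumption.
  - intros k p hp hc. apply (cover_lower_bound n m k p); auto.
  - exists z; auto.
  - intros k p hp hnc hc. apply (noncrossing_lower_bound n m k p); auto.
Qed.
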